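(* If $G$ is a (finite, loopless) multigraph and $f$ is a demand function for the line graph $L(G)$ such that each edge $e\in E(G)$ with endpoints $u,v$ satisfies $f(e) \leq 2 / (3\max\{d(u), d(v)\})$, then $L(G)$ has an $f$-coloring.
   Context: For a multigraph $G$, $\mu(uv)$ denotes the number of edges between $u$ and $v$ and $d(v)=\sum_{u\in N(v)}\mu(uv)$ is the number of edges incident to $v$. The line graph $L(G)$ has vertex set $E(G)$, two edges being adjacent when they share an endpoint. A demand function for a graph $H$ is a function $f: V(H)\to [0,1]\cap\mathbb{Q}$. A fractional coloring of $H$ assigns to each vertex a measurable subset of $[0,1]$ so that adjacent vertices receive disjoint sets; an $f$-coloring is a fractional coloring $\phi$ with Lebesgue measure of $\phi(x)$ at least $f(x)$ for every vertex $x$. *)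

From HB Require Import structures.
From mathcomp Require Import all_boot all_order all_algebra.
From mathcomp Require Import all_classical all_reals all_analysis.
Set Implicit Arguments. Unset Strict Implicit. Unset Printing Implicit Defensive.
Import Order.TTheory GRing.Theory Num.Theory.

(* A finite loopless multigraph: vertex type V, edge type E (edges are
   distinct objects, so parallel edges are allowed), endpoints src e, tgt e. *)
Definition loopless (V E : finType) (src tgt : E -> V) : Prop :=
  forall e, src e != tgt e.

Definition incident (V E : finType) (src tgt : E -> V) (v : V) (e : E) : bool :=
  (src e == v) || (tgt e == v).

Definition deg (V E : finType) (src tgt : E -> V) (v : V) : nat :=
  #|[set e : E | incident src tgt v e]|.

Definition line_adj (V E : finType) (src tgt : E -> V) (e e' : E) : bool :=
  (e != e') && [exists v : V, incident src tgt v e && incident src tgt v e'].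

Definition demand (E : finType) (f : E -> rat) : Prop :=
  forall e, (0 <= f e <= 1)%R.

Local Open Scope classical_set_scope.
Local Open Scope ring_scope.

Definition f_coloring (R : realType) (V E : finType) (src tgt : E -> V)
    (f : E -> rat) (phi : E -> set R) : Prop :=
  [/\ forall e, measurable (phi e),
      forall e, phi e `<=` `[0%R, 1%R]%classic,
      forall e e', line_adj src tgt e e' -> phi e `&` phi e' = set0
    & forall e, ((ratr (f e))%:E <= (@lebesgue_measure R) (phi e))%E].

From HB Require Import structures.
From mathcomp Require Import all_boot all_order all_algebra perm.
From mathcomp Require Import all_classical all_reals all_analysis.
From mathcomp Require Import zify ring.
Import Order.TTheory GRing.Theory Num.Theory.
Set Implicit Arguments. Unset Strict Implicit. Unset Printing Implicit Defensive.

(* Blow up every edge e into 2P/m(e) parallel copies, where m(e) is the larger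
   degree of its ends and P = |E|!, so that every vertex gets degree at most 2P.
   By Shannon's theorem the edges of this multigraph can be properly coloured
   with 3P colours; sending colour c to the interval [c/3P, (c+1)/3P) and e to
   the union of the intervals of its copies gives an f-colouring, since e then
   receives measure 2/(3 m(e)).
   Shannon's theorem (3D <= 2K colours suffice for maximum degree D) is proved
   by colouring one edge at a time. If an uncoloured edge xy cannot be coloured,
   let a be a colour missing at x and yz the edge of colour a at y; recolouring
   single edges and switching Kempe chains shows that no colour is missing at
   two of x, y, z. As at least K - D + 1 colours are missing at x and at y, and
   at least K - D at z, this gives 3 (K - D) + 2 <= K, contradicting 3D <= 2K. *)

Lemma card_le2_set2 (T : finType) (A : {set T}) (a b : T) :
  #|A| <= 2 -> a != b -> a \in A -> b \in A -> A = [set a; b].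
Proof.
move=> A2 ab aA bA; apply/esym/eqP.
by rewrite eqEcard cards2 ab A2 andbT; apply/fintype.subsetP => w /set2P [] ->.
Qed.

Section MaxDegreeTwo.
Variables (T : finType) (r : rel T).
Hypothesis r_sym : symmetric r.
Hypothesis r_deg2 : forall w, #|[set u | r w u]| <= 2.
Local Notation nbrs w := [set u | r w u].

Lemma path_nbrs y p w : path r y p -> uniq (y :: p) -> w \in p ->
  exists2 a, a \in y :: p &
    r a w /\ (w != last y p -> exists2 b, b \in p & r w b /\ a != b).
Proof.
move=> r_p uniq_p w_p; case/splitPr: w_p r_p uniq_p => p1 p2.
rewrite cat_path -cat_cons cat_uniq => /andP [_ /andP [r_aw r_p2]] /and3P [_ disj _].
exists (last y p1); first by rewrite mem_cat mem_last.
split=> //; rewrite last_cat /=.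
case: p2 r_p2 disj => [|b p2]; first by rewrite eqxx.
move=> /andP [r_wb _] /hasPn disj _; exists b; first by rewrite mem_cat !inE eqxx !orbT.
split=> //; apply: contraTneq (mem_last y p1) => ->.
by apply: disj; rewrite !inE eqxx orbT.
Qed.

Lemma path_closed y p : path r y p -> uniq (y :: p) -> p != [::] ->
  #|nbrs y| <= 1 -> #|nbrs (last y p)| <= 1 -> fingraph.closed r [pred u | u \in y :: p].
Proof.
move=> r_p uniq_p p_nil y1 last1.
apply: intro_closed; first exact: sym_connect_sym.
move=> w u r_wu /predU1P [w_y | w_p].
  case: p p_nil r_p {uniq_p last1} => //= a p _ /andP [r_ya _].
  have -> : u = a by apply: (card_le1_eqP y1); rewrite inE // -w_y.
  by rewrite !inE eqxx orbT.
have [a a_p [r_aw inner]] := path_nbrs r_p uniq_p w_p.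
rewrite r_sym in r_aw.
have [w_last | w_inner] := eqVneq w (last y p).
  by have -> : u = a by apply: (card_le1_eqP last1); rewrite inE -w_last.
have [b b_p [r_wb ab]] := inner w_inner.
have nbrs_w : nbrs w = [set a; b] by apply: card_le2_set2; rewrite ?inE.
have : u \in nbrs w by rewrite inE.
by rewrite nbrs_w => /set2P [] ->; rewrite ?a_p // inE b_p orbT.
Qed.

Lemma no_three_ends x y z :
  #|nbrs x| <= 1 -> #|nbrs y| <= 1 -> #|nbrs z| <= 1 ->
  x != y -> z != y -> z != x -> connect r y x -> ~~ connect r y z.
Proof.
move=> x1 y1 z1 xy zy zx /connectP [p0 r_p0 x_last]; subst x; apply/negP => conn_yz.
case/shortenP: r_p0 xy x1 zx => p r_p uniq_p _ xy x1 zx.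
have p_nil : p != [::] by apply: contraNneq xy => ->.
have := closed_connect (path_closed r_p uniq_p p_nil y1 x1) conn_yz.
rewrite !inE (negbTE zy) eqxx /= => /esym z_p.
have [a _ [r_az inner]] := path_nbrs r_p uniq_p z_p.
have [b _ [r_zb ab]] := inner zx.
rewrite r_sym in r_az.
have := card_le1_eqP z1 a b; rewrite !inE => /(_ r_az r_zb) ba.
by rewrite ba eqxx in ab.
Qed.

End MaxDegreeTwo.

Section EdgeColoring.
Variables (V E C : finType) (src tgt : E -> V).
Local Notation inc := (incident src tgt).

Definition proper_on (A : {set E}) (col : E -> C) :=
  {in A &, forall e e', line_adj src tgt e e' -> col e != col e'}.

Definition used (A : {set E}) (col : E -> C) (v : V) (c : C) :=
  [exists e in A, inc v e && (col e == c)].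

Definition missing (A : {set E}) (col : E -> C) (v : V) :=
  [set c | ~~ used A col v c].

Lemma usedP (A : {set E}) (col : E -> C) v c :
  reflect (exists2 e, e \in A & inc v e /\ col e = c) (used A col v c).
Proof.
apply: (iffP existsP) => [[e /and3P [eA ve /eqP <-]] | [e eA [ve <-]]].
  by exists e.
by exists e; rewrite eA ve eqxx.
Qed.

Lemma line_adjI e e' v : e != e' -> inc v e -> inc v e' -> line_adj src tgt e e'.
Proof. by move=> ee' ve ve'; apply/andP; split=> //; apply/existsP; exists v; rewrite ve. Qed.

Lemma line_adjP e e' :
  reflect (e != e' /\ exists2 v, inc v e & inc v e') (line_adj src tgt e e').
Proof.
apply: (iffP andP) => [[ee' /existsP [v /andP [ve ve']]] | [ee' [v ve ve']]].
  by split=> //; exists v.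
by split=> //; apply/existsP; exists v; rewrite ve.
Qed.

Lemma line_adj_sym : symmetric (line_adj src tgt).
Proof.
move=> e e'; apply/line_adjP/line_adjP => -[ne [v ve ve']].
  by split; rewrite 1?eq_sym //; exists v.
by split; rewrite 1?eq_sym //; exists v.
Qed.

Lemma card_missing (A : {set E}) (col : E -> C) v :
  #|C| <= #|missing A col v| + #|[set e in A | inc v e]|.
Proof.
rewrite -(cardsC (missing A col v)) leq_add2l.
apply: leq_trans (leq_imset_card col _); apply/subset_leq_card/fintype.subsetP => c.
rewrite !inE negbK => /usedP [e eA [ve <-]].
by apply/imsetP; exists e; rewrite // inE eA.
Qed.

Lemma missingI0 (A : {set E}) (col : E -> C) v w :
  (forall c, used A col v c || used A col w c) ->
  missing A col v :&: missing A col w = finset.set0.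
Proof. by move=> vw; apply/setP => c; rewrite !inE -negb_or vw. Qed.

Definition recolor (col : E -> C) (e : E) (c : C) : E -> C :=
  fun e' => if e' == e then c else col e'.

Lemma proper_recolor (A : {set E}) (col : E -> C) e c :
  proper_on A col -> ~~ used A col (src e) c -> ~~ used A col (tgt e) c ->
  proper_on (e |: A) (recolor col e c).
Proof.
move=> col_pr src_c tgt_c.
have c_new e' : e' \in A -> line_adj src tgt e e' -> col e' != c.
  move=> e'A /line_adjP [_ [v /orP [] /eqP <- ve']].
  - by apply: contraNneq src_c => <-; apply/usedP; exists e'.
  - by apply: contraNneq tgt_c => <-; apply/usedP; exists e'.
move=> e1 e2; rewrite /recolor !inE.
case: (eqVneq e1 e) => [-> _|e1e /= e1A]; case: (eqVneq e2 e) => [->|e2e] /= e2A.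
- by rewrite /line_adj eqxx.
- by rewrite eq_sym; apply: c_new.
- by rewrite line_adj_sym; apply: c_new.
- exact: col_pr.
Qed.

Lemma incident_src e : inc (src e) e.
Proof. by rewrite /incident eqxx. Qed.

Lemma incident_tgt e : inc (tgt e) e.
Proof. by rewrite /incident eqxx orbT. Qed.

Definition other (v : V) (e : E) := if src e == v then tgt e else src e.

Lemma inc_other v e : inc (other v e) e.
Proof. by rewrite /other /incident; case: ifP; rewrite eqxx ?orbT. Qed.

Lemma inc_otherP v w e : inc v e -> inc w e -> (w == v) || (w == other v e).
Proof.
move=> + we; rewrite /other /incident.
case: (eqVneq (src e) v) => [<- _ | _ /= /eqP tv]; case/orP: we => /eqP <-;
  by rewrite ?tv eqxx ?orbT.
Qed.

Lemma other_neq v e : src e != tgt e -> inc v e -> other v e != v.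
Proof.
rewrite /other => se /orP [] /eqP <-; first by rewrite eqxx eq_sym.
by rewrite (negbTE se).
Qed.

Section KempeChain.
Variables (A : {set E}) (col : E -> C) (b g : C).

Definition kempe_edge (e : E) := (e \in A) && (col e \in [set b; g]).

Definition kempe_adj : rel V := fun u w =>
  [exists e, kempe_edge e &&
     (((src e == u) && (tgt e == w)) || ((src e == w) && (tgt e == u)))].

Definition kempe_switch (y : V) : E -> C := fun e =>
  if kempe_edge e && connect kempe_adj y (src e) then tperm b g (col e) else col e.

Lemma kempe_adj_sym : symmetric kempe_adj.
Proof. by move=> u w; apply/existsP/existsP => -[e]; exists e; rewrite orbC. Qed.

Lemma kempe_switch_at y w e : e \in A -> inc w e ->
  kempe_switch y e = if connect kempe_adj y w then tperm b g (col e) else col e.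
Proof.
move=> eA we; rewrite /kempe_switch.
case: (boolP (kempe_edge e)) => ke; last first.
  have : col e \notin [set b; g] by move: ke; rewrite /kempe_edge eA.
  rewrite !inE negb_or => /andP [cb cg].
  have -> : tperm b g (col e) = col e by apply: tpermD; rewrite eq_sym.
  by case: ifP.
suff -> : connect kempe_adj y (src e) = connect kempe_adj y w by [].
have adj : kempe_adj (src e) (tgt e) by apply/existsP; exists e; rewrite ke !eqxx.
case/orP: we => /eqP <- //.
by apply: same_connect_r; [exact: sym_connect_sym kempe_adj_sym | exact: connect1].
Qed.

Lemma proper_kempe_switch y : proper_on A col -> proper_on A (kempe_switch y).
Proof.
move=> col_pr e e' eA e'A adj; have [_ [v ve ve']] := line_adjP _ _ adj.
rewrite (kempe_switch_at y eA ve) (kempe_switch_at y e'A ve').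
by case: ifP => _; rewrite ?(inj_eq perm_inj); apply: col_pr.
Qed.

Lemma used_kempe_switch y w c :
  used A (kempe_switch y) w c =
  used A col w (if connect kempe_adj y w then tperm b g c else c).
Proof.
apply/existsP/existsP => -[e /and3P [eA we ce]]; exists e; rewrite eA we /=;
  move: ce; rewrite (kempe_switch_at y eA we); case: ifP => // _.
  by move=> /eqP <-; rewrite tpermK.
by move=> /eqP ->; rewrite tpermK.
Qed.

Lemma card_kempe_nbrs w : proper_on A col ->
  #|[set u | kempe_adj w u]| <= #|[set c in [set b; g] | used A col w c]|.
Proof.
move=> col_pr; pose Ew := [set e | kempe_edge e && inc w e].
apply: (@leq_trans #|other w @: Ew|).
  apply/subset_leq_card/fintype.subsetP => u; rewrite inE => /existsP [e /andP [ke ends]].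
  apply/imsetP; exists e.
    by rewrite inE ke /incident; case/orP: ends => /andP [/eqP -> /eqP ->]; rewrite eqxx ?orbT.
  rewrite /other; case/orP: ends => /andP [/eqP -> /eqP ->]; first by rewrite eqxx.
  by case: eqVneq => [->|].
apply: (leq_trans (leq_imset_card _ _)).
have col_inj : {in Ew &, injective col}.
  move=> e e'; rewrite !inE => /andP [/andP [eA _] we] /andP [/andP [e'A _] we'] ce.
  case: (eqVneq e e') => // ee'.
  by have := col_pr e e' eA e'A (line_adjI ee' we we'); rewrite ce eqxx.
rewrite -(card_in_imset col_inj); apply/subset_leq_card/fintype.subsetP => c.
case/imsetP => e; rewrite !inE => /andP [/andP [eA ebg] we] ->.
by rewrite -in_set2 ebg; apply/usedP; exists e.
Qed.

Lemma kempe_nbrs_le2 w : proper_on A col -> #|[set u | kempe_adj w u]| <= 2.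
Proof.
move=> col_pr; apply: leq_trans (card_kempe_nbrs w col_pr) _.
apply: leq_trans (_ : #|[set b; g]| <= 2); last by rewrite cards2; case: (b != g).
by apply/subset_leq_card/fintype.subsetP => c; rewrite inE => /andP [].
Qed.

Lemma kempe_nbrs_le1 w c : proper_on A col -> c \in [set b; g] -> ~~ used A col w c ->
  #|[set u | kempe_adj w u]| <= 1.
Proof.
move=> col_pr c_bg w_c; apply: leq_trans (card_kempe_nbrs w col_pr) _.
apply: leq_trans (_ : #|[set b; g] :\ c| <= 1).
  apply/subset_leq_card/fintype.subsetP => c'; rewrite !inE => /andP [-> w_c'].
  by rewrite andbT; apply: contraNneq w_c => <-.
by move: (cardsD1 c [set b; g]); rewrite c_bg cards2 add1n => -[<-]; case: (b != g).
Qed.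

End KempeChain.
End EdgeColoring.

Section Shannon.
Variables (V E C : finType) (src tgt : E -> V) (D : nat).
Hypothesis loopless_G : loopless src tgt.
Hypothesis deg_le : forall v, deg src tgt v <= D.
Hypothesis D_C : 3 * D <= 2 * #|C|.
Local Notation inc := (incident src tgt).

Lemma card_incident_le (A : {set E}) v : #|[set e in A | inc v e]| <= D.
Proof.
apply: leq_trans (deg_le v); apply/subset_leq_card/fintype.subsetP => e.
by rewrite !inE => /andP [].
Qed.

Lemma card_incident_lt (A : {set E}) e0 v :
  e0 \notin A -> inc v e0 -> #|[set e in A | inc v e]| < D.
Proof.
move=> e0A ve0; apply: leq_trans (deg_le v); apply: proper_card.
rewrite properE; apply/andP; split.
  by apply/fintype.subsetP => e; rewrite !inE => /andP [].
by apply/fintype.subsetP => /(_ e0); rewrite !inE ve0 (negbTE e0A) => /(_ isT).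
Qed.

Section Extension.
Variables (A : {set E}) (e0 : E).
Hypothesis e0_notin : e0 \notin A.
Hypothesis no_extension : ~ exists col : E -> C, proper_on src tgt (e0 |: A) col.
Local Notation x := (src e0).
Local Notation y := (tgt e0).
Local Notation used := (used src tgt A).

Lemma exists_missing_end (col : E -> C) v : inc v e0 -> exists c, ~~ used col v c.
Proof.
move=> ve0; have A_v := card_incident_lt e0_notin ve0.
have /card_gt0P [c] : 0 < #|missing src tgt A col v|.
  by have := card_missing src tgt A col v; lia.
by rewrite inE; exists c.
Qed.

Lemma used_src_or_tgt (col : E -> C) :
  proper_on src tgt A col -> forall c, used col x c || used col y c.
Proof.
move=> col_pr c; apply/negPn/negP; rewrite negb_or => /andP [x_c y_c].
by apply: no_extension; exists (recolor col e0 c); apply: proper_recolor.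
Qed.

Lemma used_tgt_or_other (col : E -> C) e1 :
  proper_on src tgt A col -> e1 \in A -> inc y e1 -> ~~ used col x (col e1) ->
  forall c, used col y c || used col (other src tgt y e1) c.
Proof.
move=> col_pr e1A ye1 x_free c; apply/negPn/negP; rewrite negb_or => /andP [y_c z_c].
have e1_c v : inc v e1 -> ~~ used col v c.
  by move=> ve1; case/orP: (inc_otherP ye1 ve1) => /eqP ->.
have c_e1 : c != col e1 by apply: contraNneq y_c => ->; apply/usedP; exists e1.
have recol_pr : proper_on src tgt A (recolor col e1 c).
  have /finset.setUidPr <- : [set e1] \subset A by rewrite finset.sub1set.
  exact: proper_recolor col_pr (e1_c _ (incident_src _ _ e1)) (e1_c _ (incident_tgt _ _ e1)).
have := used_src_or_tgt recol_pr (col e1); apply/negP; rewrite negb_or.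
apply/andP; split; apply/usedP => -[e eA [ve]]; rewrite /recolor;
  case: eqVneq => [_ /eqP | ee1 ce]; rewrite ?(negbTE c_e1) //.
  by move/negP: x_free; apply; apply/usedP; exists e.
by have := col_pr e e1 eA e1A (line_adjI ee1 ve ye1); rewrite ce eqxx.
Qed.

(* Let b be missing at y and g at x and z. In the (b, g)-Kempe graph, of
   maximum degree 2, the vertices x, y, z have degree at most 1, so the chain of
   y misses x or z. Switching the chain of y in the first case frees g at x and
   y; otherwise switching the chain of z frees b at y and z. *)
Lemma used_src_or_other (col : E -> C) e1 :
  proper_on src tgt A col -> e1 \in A -> inc y e1 -> ~~ used col x (col e1) ->
  forall c, used col x c || used col (other src tgt y e1) c.
Proof.
move=> col_pr e1A ye1 x_free g; apply/negPn/negP; rewrite negb_or => /andP [x_g z_g].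
set z := other src tgt y e1.
have [b y_b] := exists_missing_end col (incident_tgt _ _ e0).
have xy : x != y := loopless_G e0.
have zy : z != y := other_neq (loopless_G e1) ye1.
have zx : z != x.
  by apply: contraNneq x_free => <-; apply/usedP; exists e1; rewrite ?inc_other.
have y_g : used col y g by have := used_src_or_tgt col_pr g; rewrite (negbTE x_g).
have b_g : b \in [set b; g] by rewrite !inE eqxx.
have g_bg : g \in [set b; g] by rewrite !inE eqxx orbT.
pose r := kempe_adj src tgt A col b g.
have r_sym : symmetric r := kempe_adj_sym src tgt A col b g.
have r_conn_sym : connect_sym r := sym_connect_sym r_sym.
have r_deg2 w : #|[set u | r w u]| <= 2 := kempe_nbrs_le2 b g w col_pr.
have x1 := kempe_nbrs_le1 col_pr g_bg x_g.
have y1 := kempe_nbrs_le1 col_pr b_g y_b.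
have z1 := kempe_nbrs_le1 col_pr g_bg z_g.
have [conn_yx | nconn_yx] := boolP (connect r y x); last first.
  have := used_src_or_tgt (proper_kempe_switch b g y col_pr) g.
  by rewrite !used_kempe_switch (negbTE nconn_yx) connect0 tpermR (negbTE x_g) (negbTE y_b).
have nconn_yz := no_three_ends r_sym r_deg2 x1 y1 z1 xy zy zx conn_yx.
have nconn_zy : ~~ connect r z y by rewrite r_conn_sym.
have nconn_zx : ~~ connect r z x.
  by apply: contra nconn_yz => conn_zx; rewrite (connect_trans conn_yx) // r_conn_sym.
have a_bg : col e1 \notin [set b; g].
  rewrite !inE negb_or; apply/andP; split.
    by apply: contraNneq y_b => <-; apply/usedP; exists e1.
  by apply: contraNneq z_g => <-; apply/usedP; exists e1; rewrite ?inc_other.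
have switch_e1 : kempe_switch src tgt A col b g z e1 = col e1.
  by rewrite (kempe_switch_at col b g z e1A ye1) (negbTE nconn_zy).
have := used_tgt_or_other (proper_kempe_switch b g z col_pr) e1A ye1.
rewrite switch_e1 used_kempe_switch (negbTE nconn_zx) => /(_ x_free b).
by rewrite !used_kempe_switch (negbTE nconn_zy) connect0 tpermL (negbTE y_b) (negbTE z_g).
Qed.

Lemma no_extension_absurd (col : E -> C) : proper_on src tgt A col -> False.
Proof.
move=> col_pr.
have [a x_a] := exists_missing_end col (incident_src _ _ e0).
have := used_src_or_tgt col_pr a; rewrite (negbTE x_a) => /usedP [e1 e1A [ye1 a_e1]].
have x_free : ~~ used col x (col e1) by rewrite a_e1.
set z := other src tgt y e1.
have Mxy := missingI0 (used_src_or_tgt col_pr).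
have Myz := missingI0 (used_tgt_or_other col_pr e1A ye1 x_free).
have Mxz := missingI0 (used_src_or_other col_pr e1A ye1 x_free).
have := max_card (mem (missing src tgt A col x :|: missing src tgt A col y
                         :|: missing src tgt A col z)).
rewrite cardsU finset.setIUl Mxz Myz finset.setU0 cards0 subn0 cardsU Mxy cards0 subn0.
have := card_missing src tgt A col x; have := card_missing src tgt A col y.
have := card_missing src tgt A col z; have := card_incident_le A z.
have := card_incident_lt e0_notin (incident_src _ _ e0).
have := card_incident_lt e0_notin (incident_tgt _ _ e0).
lia.
Qed.

End Extension.

Theorem shannon_edge_coloring :
  exists col : E -> C, forall e e', line_adj src tgt e e' -> col e != col e'.
Proof.
have C_gt0 (e : E) : 0 < #|C|.
  have : 0 < deg src tgt (src e) by apply/card_gt0P; exists e; rewrite inE incident_src.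
  by have := deg_le (src e); lia.
pose c0 e : C := xchoose (elimT card_gt0P (C_gt0 e)).
suff ext (s : seq E) : exists col : E -> C, proper_on src tgt [set e in s] col.
  by have [col col_pr] := ext (enum E); exists col => e e'; apply: col_pr; rewrite inE mem_enum.
elim: s => [|e0 s [col col_pr]]; first by exists c0 => e; rewrite inE.
have -> : [set e in e0 :: s] = e0 |: [set e in s] by apply/setP => e; rewrite !inE.
have [e0s | e0s] := boolP (e0 \in [set e in s]).
  have /finset.setUidPr -> : [set e0] \subset [set e in s] by rewrite finset.sub1set.
  by exists col.
by apply: contrapT => no_ext; apply: (no_extension_absurd e0s no_ext col_pr).
Qed.

End Shannon.

Lemma in_bigsetU_ord (T : Type) n (F : 'I_n -> set T) t :
  (\big[setU/set0]_(i < n) F i)%classic t -> exists i, F i t.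
Proof. by rewrite -(bigcup_pred predT) => -[i]; exists i. Qed.

Section Slots.
Variables (R : realType) (N : nat).
Local Open Scope ring_scope.
Local Open Scope classical_set_scope.

Definition slot (c : 'I_N) : set R := `[c%:R / N%:R, c.+1%:R / N%:R[.

Lemma measurable_slot c : measurable (slot c).
Proof. exact: measurable_itv. Qed.

Lemma lebesgue_slot c : lebesgue_measure (slot c) = (N%:R^-1)%:E.
Proof.
have N_gt0 : (0 < N%:R :> R) by rewrite ltr0n (leq_ltn_trans _ (ltn_ord c)).
rewrite lebesgue_measure_itv /= lte_fin ltr_pM2r ?invr_gt0 // ltr_nat ltnSn -EFinB.
by rewrite -mulrBl -natrB // subSnn mul1r.
Qed.

Lemma slot_sub01 c : slot c `<=` `[0, 1].
Proof.
have N_gt0 : (0 < N%:R :> R) by rewrite ltr0n (leq_ltn_trans _ (ltn_ord c)).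
move=> t; rewrite /slot /= !in_itv /= => /andP [ct tc]; apply/andP; split.
  by apply: le_trans _ ct; rewrite divr_ge0.
by apply/ltW/(lt_le_trans tc); rewrite ler_pdivrMr // mul1r ler_nat.
Qed.

Lemma slot_inj c c' t : slot c t -> slot c' t -> c = c'.
Proof.
have N_gt0 : (0 < N%:R^-1 :> R) by rewrite invr_gt0 ltr0n (leq_ltn_trans _ (ltn_ord c)).
rewrite /slot /= !in_itv /= => /andP [ct tc] /andP [c't tc'].
have := le_lt_trans ct tc'; have := le_lt_trans c't tc.
rewrite !ltr_pM2r // !ltr_nat !ltnS => c'c cc'.
by apply/val_inj/eqP; rewrite eqn_leq cc' c'c.
Qed.

End Slots.

Section Blowup.
Variables (V E : finType) (src tgt : E -> V) (mult : E -> nat).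

Definition blowup := {e : E & 'I_(mult e)}.

Definition copy (e : E) (i : 'I_(mult e)) : blowup := Tagged (fun e => 'I_(mult e)) i.

Definition blowup_src (p : blowup) := src (tag p).
Definition blowup_tgt (p : blowup) := tgt (tag p).

Lemma loopless_blowup : loopless src tgt -> loopless blowup_src blowup_tgt.
Proof. by move=> G_loopless p; apply: G_loopless. Qed.

Lemma deg_blowup v :
  deg blowup_src blowup_tgt v = \sum_(e | incident src tgt v e) mult e.
Proof.
rewrite /deg -sum1_card (eq_bigl (fun p => incident src tgt v (tag p) && true)); last first.
  by move=> p; rewrite inE andbT.
rewrite -(sig_big_dep (fun e => incident src tgt v e) (fun e _ => true) (fun _ _ => 1)) /=.
by apply: eq_bigr => e _; rewrite sum1_card card_ord.
Qed.

Lemma deg_blowup_le M v :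
  (forall e, incident src tgt v e -> mult e * deg src tgt v <= M) ->
  deg blowup_src blowup_tgt v <= M.
Proof.
move=> mult_le; rewrite deg_blowup.
case: (posnP (deg src tgt v)) => [deg0 | deg_gt0].
  rewrite big_pred0 // => e; apply/negP => ve.
  by move: deg0 => /eqP; apply/negP; rewrite -lt0n; apply/card_gt0P; exists e; rewrite inE.
apply: leq_trans (_ : \sum_(e | incident src tgt v e) (M %/ deg src tgt v) <= _).
  by apply: leq_sum => e ve; rewrite leq_divRL // mult_le.
rewrite sum_nat_const (_ : #|_| = deg src tgt v); last by apply: eq_card => e; rewrite inE.
by rewrite mulnC leq_trunc_div.
Qed.

Lemma line_adj_copy e e' (i : 'I_(mult e)) (j : 'I_(mult e')) :
  line_adj src tgt e e' -> line_adj blowup_src blowup_tgt (copy i) (copy j).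
Proof.
case/line_adjP => ee' [v ve ve']; apply/line_adjP; split; last by exists v.
by apply: contra ee' => /eqP/(congr1 tag) /= ->.
Qed.

Lemma line_adj_copy_same e (i j : 'I_(mult e)) :
  i != j -> line_adj blowup_src blowup_tgt (copy i) (copy j).
Proof.
move=> ij; apply/line_adjP; split; last by exists (src e); exact: (incident_src src tgt e).
by apply: contra ij; rewrite eq_Tagged.
Qed.

Local Open Scope ring_scope.
Local Open Scope classical_set_scope.

Lemma f_coloring_of_blowup_coloring (R : realType) (f : E -> rat) (N : nat)
    (col : blowup -> 'I_N) :
  (forall p q, line_adj blowup_src blowup_tgt p q -> col p != col q) ->
  (forall e, f e <= (mult e)%:R / N%:R) ->
  exists phi : E -> set R, f_coloring src tgt f phi.
Proof.
move=> col_pr f_le.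
exists (fun e => \big[setU/set0]_(i < mult e) slot (col (copy i))); split.
- by move=> e; apply: bigsetU_measurable => i _; apply: measurable_slot.
- by move=> e t et; have [i] := in_bigsetU_ord et; apply: slot_sub01.
- move=> e e' adj; apply/seteqP; split=> // t [et e't].
  have [i ti] := in_bigsetU_ord et; have [j tj] := in_bigsetU_ord e't.
  by move/eqP: (col_pr _ _ (line_adj_copy i j adj)); apply; apply: slot_inj ti tj.
- move=> e; rewrite measure_bigsetU_ord; last first.
  + move=> i j _ _ [t [ti tj]]; apply: contra_eq (slot_inj ti tj) => ij.
    exact: col_pr _ _ (line_adj_copy_same ij).
  + by move=> i; apply: measurable_slot.
  rewrite (eq_bigr _ (fun i _ => lebesgue_slot R (col (copy i)))) sumEFin sumr_const.
  rewrite card_ord lee_fin.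
  apply: le_trans (_ : ratr ((mult e)%:R / N%:R) <= _); first by rewrite ler_rat.
  by rewrite fmorph_div !rmorph_nat mulrC mulr_natr.
Qed.

End Blowup.

Local Open Scope ring_scope.

Theorem theorem6p2 (R : realType) (V E : finType) (src tgt : E -> V)
    (f : E -> rat) :
  loopless src tgt ->
  demand f ->
  (forall e : E,
     f e <= 2 / (3 * (maxn (deg src tgt (src e)) (deg src tgt (tgt e)))%:R)) ->
  exists phi : E -> set R, f_coloring src tgt f phi.
Proof.
move=> G_loopless _ f_le.
pose P := (#|E|)`!; have P_gt0 : (0 < P)%N := fact_gt0 _.
pose m e := maxn (deg src tgt (src e)) (deg src tgt (tgt e)).
have m_gt0 e : (0 < m e)%N.
  by rewrite leq_max; apply/orP; left; apply/card_gt0P; exists e; rewrite inE incident_src.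
have m_dvd e : (m e %| P)%N by rewrite dvdn_fact // m_gt0 geq_max !max_card.
pose mult e := (2 * P %/ m e)%N.
have mult_m e : (mult e * m e = 2 * P)%N by rewrite divnK // dvdn_mull.
have mult_deg e v : incident src tgt v e -> (mult e * deg src tgt v <= 2 * P)%N.
  by rewrite -(mult_m e) leq_mul2l /m leq_max => /orP [] /eqP ->; rewrite leqnn ?orbT.
have colors : (3 * (2 * P) <= 2 * #|'I_(3 * P)|)%N by rewrite card_ord mulnCA.
have [col col_pr] := shannon_edge_coloring (loopless_blowup (mult := mult) G_loopless)
  (fun v => deg_blowup_le (mult_deg^~ v)) colors.
apply: f_coloring_of_blowup_coloring col_pr _ => e.
have m_neq0 : (m e)%:R != 0 :> rat by rewrite pnatr_eq0 -lt0n.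
have P_neq0 : P%:R != 0 :> rat by rewrite pnatr_eq0 -lt0n.
rewrite -[(mult e)%:R](mulfK m_neq0) -natrM mult_m !natrM.
suff -> : 2 * P%:R / (m e)%:R / (3 * P%:R) = 2 / (3 * (m e)%:R) :> rat by apply: f_le.
by field; rewrite m_neq0 P_neq0.
Qed.
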